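(* Let $C_1$ and $C_2$ be maximal configurations of finite labeled prime event structures $\mathcal{E}_1$ and $\mathcal{E}_2$ with labelings $h_1,h_2$, and suppose that for every $e_1\in C_1$ and $e_2\in C_2$ we have $|\{e\in C_1\mid h_1(e_1)=h_1(e)\}|=1$ and $|\{e\in C_2\mid h_2(e_2)=h_2(e)\}|=1$. If $\mathcal{L}(C_1)\subseteq\mathcal{L}(C_2)$, then $C_1\sqsubset_S C_2$.
   Context: A finite $\mathcal{X}$-labeled prime event structure is $\langle E,<,\#,h\rangle$ with finite $E$, strict partial order $<$, labeling $h:E\to\mathcal{X}$, and symmetric irreflexive conflict relation $\#$ closed under $<$; $\mathcal{X}$ contains $\varepsilon$ denoting the empty word; there is an event $\bot$ below all other events with $h(\bot)=\varepsilon$. A configuration is a left-closed, conflict-free subset of $E$; maximal if no configuration strictly contains it. A trace of a configuration $C$ lists every event of $C$ exactly once such that $e_i<e_j$ implies $i<j$; $\mathcal{L}(C)=\{h(t)\mid t$ a trace of $C\}$ (labels pointwise, $\varepsilon$ omitted). With causal orders $<_1,<_2$, a sufficient embedding $\varphi:C_1\to C_2$ is a bijection with $h_1(e)=h_2(\varphi(e))$ for all $e\in C_1$ and such that $\varphi(e_1)<_2\varphi(e_2)$ implies $e_1<_1e_2$; $C_1\sqsubset_S C_2$ means such an embedding exists. *)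

From mathcomp Require Import all_boot.
Set Implicit Arguments. Unset Strict Implicit. Unset Printing Implicit Defensive.

(* A finite X-labeled prime event structure; [eps] is the label denoting the
   empty word. *)
Record pes (X : eqType) (eps : X) := Pes {
  ev :> finType;
  lt_ev : rel ev;
  cf_ev : rel ev;
  lab : ev -> X;
  bot : ev;
  lt_irr : forall e, ~~ lt_ev e e;
  lt_trans : forall e1 e2 e3, lt_ev e1 e2 -> lt_ev e2 e3 -> lt_ev e1 e3;
  cf_sym : forall e1 e2, cf_ev e1 e2 = cf_ev e2 e1;
  cf_irr : forall e, ~~ cf_ev e e;
  cf_hered : forall e1 e2 e3, cf_ev e1 e2 -> lt_ev e2 e3 -> cf_ev e1 e3;
  bot_least : forall e, e != bot -> lt_ev bot e;
  bot_lab : lab bot = eps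
}.

Section Defs.
Variables (X : eqType) (eps : X).

Definition is_config (E : pes eps) (C : {set E}) : Prop :=
  (forall e e', e' \in C -> lt_ev e e' -> e \in C) /\
  (forall e e', e \in C -> e' \in C -> ~~ cf_ev e e').

Definition is_max_config (E : pes eps) (C : {set E}) : Prop :=
  is_config C /\ forall C', is_config C' -> C \subset C' -> C' = C.

Definition is_trace (E : pes eps) (C : {set E}) (t : seq E) : Prop :=
  uniq t /\ (forall e, (e \in t) = (e \in C)) /\
  (forall (d : E) i j, i < size t -> j < size t ->
     lt_ev (nth d t i) (nth d t j) -> i < j).

Definition word (E : pes eps) (t : seq E) : seq X :=
  [seq x <- map (@lab _ _ E) t | x != eps].

Definition lang (E : pes eps) (C : {set E}) (w : seq X) : Prop :=
  exists t, is_trace C t /\ word t = w.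

Definition suff_embedding (E1 E2 : pes eps) (C1 : {set E1}) (C2 : {set E2})
  (phi : E1 -> E2) : Prop :=
  {in C1 &, injective phi} /\ phi @: C1 = C2 /\
  {in C1, forall e, lab e = lab (phi e)} /\
  {in C1 &, forall e1 e2, lt_ev (phi e1) (phi e2) -> lt_ev e1 e2}.

Definition suff_embeds (E1 E2 : pes eps) (C1 : {set E1}) (C2 : {set E2}) :
  Prop := exists phi : E1 -> E2, suff_embedding C1 C2 phi.

End Defs.

From mathcomp Require Import all_boot.
Set Implicit Arguments. Unset Strict Implicit. Unset Printing Implicit Defensive.

(* Injective labels let [phi] send each event of C1 to the event of C2 with
   the same label; comparing the words of traces of C1 and C2 shows that both
   configurations carry the same labels, so [phi] is a bijection.  If
   [phi e1 < phi e2] but not [e1 < e2], schedule the down-closure of [e2]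
   first: this gives a trace of C1 whose word has [h e2] before [h e1], while
   every trace of C2, hence every word of L(C2), has [h e1] before [h e2]. *)

Lemma index_filter_lt (T : eqType) (p : pred T) (s : seq T) x y :
  p x -> y \in s -> index x s < index y s ->
  index x (filter p s) < index y (filter p s).
Proof.
move=> px; elim: s => //= a s IH; rewrite inE.
have [->|ax] := eqVneq a x; first by rewrite px /= eqxx => _; case: eqVneq.
have [<-|ay] //= := eqVneq a y; rewrite ltnS => ys /(IH ys).
by case: ifP => _ //=; rewrite (negbTE ax) (negbTE ay).
Qed.

Lemma index_map_in (T1 T2 : eqType) (f : T1 -> T2) (s : seq T1) x :
  {in s &, injective f} -> x \in s -> index (f x) (map f s) = index x s.
Proof.
elim: s => //= y s IH inj; rewrite inE => /predU1P[->|xs].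
  by rewrite !eqxx.
rewrite (inj_in_eq inj) ?inE ?xs ?eqxx ?orbT //; case: eqVneq => // _.
by rewrite IH // => u v us vs; apply: inj; rewrite inE ?us ?vs orbT.
Qed.

Lemma card_fiber1_inj (T : finType) (Y : eqType) (f : T -> Y) (A : {set T}) :
  {in A, forall x, #|[set y in A | f x == f y]| = 1} -> {in A &, injective f}.
Proof.
move=> fiber1 x y xA yA fxy.
have /card_le1_eqP fiber_x : #|[set z in A | f x == f z]| <= 1.
  by rewrite fiber1.
by apply: fiber_x; rewrite !inE ?xA ?yA ?fxy eqxx.
Qed.

Section Transfer.
Variables (T1 T2 : finType) (Y : eqType) (f1 : T1 -> Y) (f2 : T2 -> Y).
Variables (A1 : {set T1}) (A2 : {set T2}) (d : T2).
Hypotheses (inj1 : {in A1 &, injective f1}) (inj2 : {in A2 &, injective f2}).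
Hypothesis image_f12 : image f1 A1 =i image f2 A2.

Definition transfer (x : T1) : T2 := odflt d [pick y in A2 | f2 y == f1 x].

Lemma transferP x : x \in A1 -> transfer x \in A2 /\ f2 (transfer x) = f1 x.
Proof.
move=> xA; rewrite /transfer; case: pickP => [y /andP[-> /eqP] //|none].
have /imageP[y yA fxy] : f1 x \in image f2 A2 by rewrite -image_f12 image_f.
by have := none y; rewrite yA fxy eqxx.
Qed.

Lemma transfer_inj : {in A1 &, injective transfer}.
Proof.
move=> x y xA yA exy; apply: inj1 => //.
by rewrite -(transferP xA).2 -(transferP yA).2 exy.
Qed.

Lemma transfer_imset : transfer @: A1 = A2.
Proof.
apply/setP => z; apply/imsetP/idP => [[x xA ->]|zA].
  exact: (transferP xA).1.
have /imageP[x xA fxz] : f2 z \in image f1 A1 by rewrite image_f12 image_f.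
have [txA ftx] := transferP xA.
by exists x => //; apply: inj2; rewrite ?ftx.
Qed.

End Transfer.

Section EventStructure.
Variables (X : eqType) (eps : X) (E : pes eps).
Implicit Types (C : {set E}) (t : seq E) (e : E).

Lemma lt_ev_bot e : lt_ev e (bot E) = false.
Proof.
apply/negbTE/negP => lt_e_bot; have [e_bot|e_nbot] := eqVneq e (bot E).
  by move: lt_e_bot; rewrite e_bot (negbTE (lt_irr _)).
by have := lt_irr e; rewrite (lt_trans lt_e_bot (bot_least e_nbot)).
Qed.

Lemma cf_ev_bot e : cf_ev (bot E) e = false.
Proof.
apply/negbTE/negP => cf_bot_e; have [e_bot|e_nbot] := eqVneq e (bot E).
  by move: cf_bot_e; rewrite e_bot (negbTE (cf_irr _)).
rewrite cf_sym in cf_bot_e.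
by have := cf_irr e; rewrite (cf_hered cf_bot_e (bot_least e_nbot)).
Qed.

Lemma max_config_bot C : is_max_config C -> bot E \in C.
Proof.
move=> [[C_closed C_cf] C_max].
suff <- : bot E |: C = C by rewrite setU11.
apply: C_max (subsetUr _ _); split=> [e e'|e e'].
  rewrite !inE => /predU1P[->|/C_closed Ce]; first by rewrite lt_ev_bot.
  by move=> /Ce->; rewrite orbT.
rewrite !inE => /predU1P[->|Ce] /predU1P[->|Ce']; rewrite ?cf_ev_bot //.
  by rewrite cf_sym cf_ev_bot.
exact: C_cf.
Qed.

Lemma lab_neq_eps C e :
  bot E \in C -> {in C &, injective (@lab _ _ E)} -> e \in C -> e != bot E ->
  lab e != eps.
Proof.
move=> Cbot inj Ce; apply: contra_neq => le_eps.
by apply: inj; rewrite ?le_eps ?bot_lab.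
Qed.

Definition depth e := #|[set e' | lt_ev e' e]|.

Lemma depth_lt e e' : lt_ev e e' -> depth e < depth e'.
Proof.
move=> lt_ee'; apply/proper_card/properP; split.
  by apply/subsetP => z; rewrite !inE => /lt_trans; apply.
by exists e; rewrite !inE ?lt_ee' ?(negbTE (lt_irr _)).
Qed.

Definition key_sort (key : E -> nat) C := sort (relpre key leq) (enum C).

Lemma mem_key_sort key C : key_sort key C =i C.
Proof. by move=> e; rewrite mem_sort mem_enum. Qed.

Lemma key_sort_index key C : {in C &, forall e e',
  key e < key e' -> index e (key_sort key C) < index e' (key_sort key C)}.
Proof.
move=> e e' Ce Ce'; apply: contraTT; rewrite -!leqNgt.
apply: (sorted_leq_index (leT := relpre key leq)); rewrite ?mem_key_sort //.
- by move=> ? ? ?; apply: leq_trans.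
- by move=> ?; apply: leqnn.
- by apply: sort_sorted => x y; apply: leq_total.
Qed.

Lemma key_sort_trace key C :
  {homo key : e e' / lt_ev e e' >-> e < e'} -> is_trace C (key_sort key C).
Proof.
move=> key_mono.
have t_uniq : uniq (key_sort key C) by rewrite sort_uniq enum_uniq.
split=> //; split=> [|d i j ilt jlt /key_mono]; first exact: mem_key_sort.
rewrite -{2}(index_uniq d ilt t_uniq) -{2}(index_uniq d jlt t_uniq).
by apply: key_sort_index; rewrite -(mem_key_sort key) mem_nth.
Qed.

Lemma trace_exists C : exists t, is_trace C t.
Proof. by exists (key_sort depth C); apply: key_sort_trace depth_lt. Qed.

(* Events of the down-closure of [e'] get their depth as key, the others their
   depth shifted past every depth. *)
Lemma trace_before C e e' :
  e \in C -> e' \in C -> e != e' -> ~~ lt_ev e e' ->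
  exists2 t, is_trace C t & index e' t < index e t.
Proof.
move=> Ce Ce' neq_ee' nlt_ee'.
pose below x := (x == e') || lt_ev x e'.
pose key x := depth x + ~~ below x * #|E|.+1.
have depth_small x : depth x < #|E|.+1 by rewrite ltnS max_card.
have key_mono : {homo key : x y / lt_ev x y >-> x < y}.
  move=> x y lt_xy; rewrite /key; have [below_y|_] := boolP (below y).
    have -> : below x.
      rewrite /below; case/predU1P: below_y => [<-|/(lt_trans lt_xy)->].
        by rewrite lt_xy orbT.
      by rewrite orbT.
    by rewrite !addn0 depth_lt.
  apply: leq_ltn_trans (_ : _ <= depth x + #|E|.+1) _.
    by rewrite leq_add2l; case: (below x); rewrite ?mul1n.
  by rewrite /= mul1n ltn_add2r depth_lt.
exists (key_sort key C); first exact: key_sort_trace.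
apply: key_sort_index => //; rewrite /key /below /= eqxx.
by rewrite (negbTE neq_ee') (negbTE nlt_ee') /= mul0n mul1n addn0 ltn_addl.
Qed.

Lemma trace_index_lt C t e e' :
  is_trace C t -> e \in C -> e' \in C -> lt_ev e e' -> index e t < index e' t.
Proof.
move=> [_ [t_mem t_lt]] Ce Ce' lt_ee'; rewrite -!t_mem in Ce Ce'.
by apply: (t_lt e); rewrite ?index_mem ?nth_index.
Qed.

Lemma mem_word_trace C t x :
  is_trace C t -> (x \in word t) = (x != eps) && (x \in image (@lab _ _ E) C).
Proof.
move=> [_ [t_mem _]]; rewrite mem_filter; congr (_ && _).
by apply/mapP/imageP => -[e e_in ->]; exists e; rewrite ?t_mem in e_in *.
Qed.

Lemma word_index_lt C t e e' :
  is_trace C t -> {in C &, injective (@lab _ _ E)} -> e \in C -> e' \in C ->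
  lab e != eps -> index e t < index e' t ->
  index (lab e) (word t) < index (lab e') (word t).
Proof.
move=> [_ [t_mem _]] inj Ce Ce' le_eps lt_ee'.
have inj_t : {in t &, injective (@lab _ _ E)}.
  by move=> x y; rewrite !t_mem; apply: inj.
apply: index_filter_lt; rewrite ?map_f ?t_mem //.
by rewrite !index_map_in ?t_mem.
Qed.

Lemma lang_index_lt C w e e' :
  {in C &, injective (@lab _ _ E)} -> lang C w -> e \in C -> e' \in C ->
  lab e != eps -> lt_ev e e' -> index (lab e) w < index (lab e') w.
Proof.
move=> inj [t [t_tr <-]] Ce Ce' le_eps lt_ee'.
apply: (word_index_lt t_tr inj Ce Ce' le_eps).
exact: trace_index_lt t_tr Ce Ce' lt_ee'.
Qed.

Lemma lang_index_gt C e e' :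
  {in C &, injective (@lab _ _ E)} -> e \in C -> e' \in C ->
  lab e' != eps -> e != e' -> ~~ lt_ev e e' ->
  exists2 w, lang C w & index (lab e') w < index (lab e) w.
Proof.
move=> inj Ce Ce' le'_eps neq_ee' nlt_ee'.
have [t t_tr lt_e'e] := trace_before Ce Ce' neq_ee' nlt_ee'.
exists (word t); first by exists t.
exact: word_index_lt t_tr inj Ce' Ce le'_eps lt_e'e.
Qed.

End EventStructure.

Section LanguageInclusion.
Variables (X : eqType) (eps : X) (E1 E2 : pes eps).
Variables (C1 : {set E1}) (C2 : {set E2}).
Hypotheses (C1bot : bot E1 \in C1) (C2bot : bot E2 \in C2).
Hypotheses (inj1 : {in C1 &, injective (@lab _ _ E1)}).
Hypotheses (inj2 : {in C2 &, injective (@lab _ _ E2)}).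
Hypothesis lang_sub : forall w, lang C1 w -> lang C2 w.

Lemma lang_sub_image_lab : image (@lab _ _ E1) C1 =i image (@lab _ _ E2) C2.
Proof.
have [t1 t1_tr] := trace_exists C1.
have [t2 [t2_tr w21]] := lang_sub (ex_intro _ t1 (conj t1_tr erefl)).
move=> x; have [->|x_eps] := eqVneq x eps.
  have := image_f (@lab _ _ E1) C1bot; have := image_f (@lab _ _ E2) C2bot.
  by rewrite !bot_lab => -> ->.
have := mem_word_trace x t2_tr; rewrite w21 (mem_word_trace x t1_tr).
by rewrite x_eps.
Qed.

Lemma lang_sub_reflect_lt (phi : E1 -> E2) :
  {in C1, forall e, phi e \in C2 /\ lab (phi e) = lab e} ->
  {in C1 &, forall e1 e2, lt_ev (phi e1) (phi e2) -> lt_ev e1 e2}.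
Proof.
move=> phiP e1 e2 Ce1 Ce2 lt_phi; apply/contraT => nlt_e12.
have [[C2phi1 lab1] [C2phi2 lab2]] := (phiP e1 Ce1, phiP e2 Ce2).
have neq_e12 : e1 != e2 by apply: contraTneq lt_phi => ->; rewrite lt_irr.
have e1_nbot : e1 != bot E1.
  apply: contraNneq nlt_e12 => e1_bot.
  by rewrite e1_bot bot_least // -e1_bot eq_sym.
have e1_eps : lab e1 != eps := lab_neq_eps C1bot inj1 Ce1 e1_nbot.
have e2_eps : lab e2 != eps.
  rewrite -lab2 (lab_neq_eps C2bot) //.
  by apply: contraTneq lt_phi => ->; rewrite lt_ev_bot.
have [w /lang_sub w2 lt_21] :=
  lang_index_gt inj1 Ce1 Ce2 e2_eps neq_e12 nlt_e12.
have := lang_index_lt inj2 w2 C2phi1 C2phi2 _ lt_phi.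
by rewrite lab1 lab2 => /(_ e1_eps) /(ltn_trans lt_21); rewrite ltnn.
Qed.

End LanguageInclusion.

Theorem lemma10 (X : eqType) (eps : X) (E1 E2 : pes eps)
  (C1 : {set E1}) (C2 : {set E2}) :
  is_max_config C1 -> is_max_config C2 ->
  (forall e1, e1 \in C1 -> #|[set e in C1 | lab e1 == lab e]| = 1) ->
  (forall e2, e2 \in C2 -> #|[set e in C2 | lab e2 == lab e]| = 1) ->
  (forall w, lang C1 w -> lang C2 w) ->
  suff_embeds C1 C2.
Proof.
move=> /max_config_bot C1bot /max_config_bot C2bot /card_fiber1_inj inj1
  /card_fiber1_inj inj2 lang_sub.
have lab12 := lang_sub_image_lab C1bot C2bot lang_sub.
have phiP := transferP (bot E2) lab12.
exists (transfer (@lab _ _ E1) (@lab _ _ E2) C2 (bot E2)).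
split; [exact: transfer_inj | split; [exact: transfer_imset | split]].
  by move=> e Ce; rewrite (phiP e Ce).2.
exact: lang_sub_reflect_lt C1bot C2bot inj1 inj2 lang_sub _ phiP.
Qed.
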